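(* Let $P\in\mathcal S^d$ be such that $\mathcal N_1(P)$ and $S_2:=\mathcal N_2(P)-\mathcal L_{12}(P)^\top\mathcal N_1(P)^{-1}\mathcal L_{12}(P)$ are invertible, and set $$K_2^*=\big(\mathcal L_{12}(P)^\top\mathcal N_1(P)^{-1}\mathcal L_{12}(P)-\mathcal N_2(P)\big)^{-1}\big(\mathcal L_2(P)^\top-\mathcal L_{12}(P)^\top\mathcal N_1(P)^{-1}\mathcal L_1(P)^\top\big).$$ Define $\mathcal M^{2*}(P)=\mathcal M(P)+\mathcal L_2(P)K_2^*+(\mathcal L_2(P)K_2^* )^\top+(K_2^* )^\top\mathcal N_2(P)K_2^*$, $\mathcal L^{2*}_1(P)=\mathcal L_1(P)+(\mathcal L_{12}(P)K_2^* )^\top$, $\mathcal N^{2*}_1(P)=\mathcal N_1(P)$. Then $P$ solves $0=\mathcal M^{2*}(P)-\mathcal L^{2*}_1(P)\mathcal N^{2*}_1(P)^{-1}\mathcal L^{2*}_1(P)^\top$ if and only if $P$ solves $0=\mathcal M(P)-\mathcal L(P)\mathcal N(P)^{-1}\mathcal L(P)^\top$.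
   Context: $\mathcal S^d$: symmetric $d\times d$ matrices. Fix $d,\ell\ge1$, $\gamma\in[0,1]$, $A\in\mathbb R^{d\times d}$, $B_1,B_2\in\mathbb R^{d\times\ell}$, $Q\in\mathcal S^d$, $R_1,R_2\in\mathcal S^\ell$. For $P\in\mathcal S^d$: $\mathcal M(P)=\gamma A^\top PA-P+Q$, $\mathcal L_i(P)=\gamma A^\top PB_i$ ($i=1,2$), $\mathcal L_{12}(P)=\gamma B_1^\top PB_2$, $\mathcal N_1(P)=\gamma B_1^\top PB_1+R_1$, $\mathcal N_2(P)=\gamma B_2^\top PB_2-R_2$, $\mathcal L(P)=[\mathcal L_1(P),\mathcal L_2(P)]\in\mathbb R^{d\times2\ell}$, $\mathcal N(P)=\begin{bmatrix}\mathcal N_1(P)&\mathcal L_{12}(P)\\\mathcal L_{12}(P)^\top&\mathcal N_2(P)\end{bmatrix}$ (which is invertible under the hypotheses). *)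

From mathcomp Require Import all_boot all_order all_algebra.
Set Implicit Arguments. Unset Strict Implicit. Unset Printing Implicit Defensive.
Import Order.TTheory GRing.Theory Num.Theory.
Local Open Scope ring_scope.

Section Ops.
Variables (R : realFieldType) (d l : nat) (gamma : R).
Variables (A : 'M[R]_d) (B1 B2 : 'M[R]_(d, l)) (Q : 'M[R]_d) (R1 R2 : 'M[R]_l).

Definition symmx n (X : 'M[R]_n) := X^T = X.

Definition Mop (P : 'M[R]_d) : 'M[R]_d := gamma *: (A^T *m P *m A) - P + Q.
Definition L1op (P : 'M[R]_d) : 'M[R]_(d, l) := gamma *: (A^T *m P *m B1).
Definition L2op (P : 'M[R]_d) : 'M[R]_(d, l) := gamma *: (A^T *m P *m B2).
Definition L12op (P : 'M[R]_d) : 'M[R]_l := gamma *: (B1^T *m P *m B2).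
Definition N1op (P : 'M[R]_d) : 'M[R]_l := gamma *: (B1^T *m P *m B1) + R1.
Definition N2op (P : 'M[R]_d) : 'M[R]_l := gamma *: (B2^T *m P *m B2) - R2.
Definition Lop (P : 'M[R]_d) : 'M[R]_(d, l + l) := row_mx (L1op P) (L2op P).
Definition Nop (P : 'M[R]_d) : 'M[R]_(l + l) :=
  block_mx (N1op P) (L12op P) (L12op P)^T (N2op P).

Definition S2op (P : 'M[R]_d) : 'M[R]_l :=
  N2op P - (L12op P)^T *m invmx (N1op P) *m L12op P.

Definition K2star (P : 'M[R]_d) : 'M[R]_(l, d) :=
  invmx ((L12op P)^T *m invmx (N1op P) *m L12op P - N2op P) *m
  ((L2op P)^T - (L12op P)^T *m invmx (N1op P) *m (L1op P)^T).

Definition M2star (P : 'M[R]_d) : 'M[R]_d :=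
  Mop P + L2op P *m K2star P + (L2op P *m K2star P)^T
  + (K2star P)^T *m N2op P *m K2star P.
Definition L1_2star (P : 'M[R]_d) : 'M[R]_(d, l) :=
  L1op P + (L12op P *m K2star P)^T.
Definition N1_2star (P : 'M[R]_d) : 'M[R]_l := N1op P.

End Ops.

From mathcomp Require Import all_boot all_order all_algebra.
Set Implicit Arguments. Unset Strict Implicit. Unset Printing Implicit Defensive.
Import Order.TTheory GRing.Theory Num.Theory.
Local Open Scope ring_scope.

(* With S the Schur complement of N1 in the symmetric matrix N and
   Z = L2 - L1 N1^-1 L12, the block inverse of N gives
     L N^-1 L^T = L1 N1^-1 L1^T + Z S^-1 Z^T.
   On the other side, for any gain K the reduced Riccati expression equals
     M - L1 N1^-1 L1^T + Z K + (Z K)^T + K^T S K,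
   and K2* = -S^-1 Z^T is the critical point of this quadratic in K, where
   it takes the value M - L1 N1^-1 L1^T - Z S^-1 Z^T. Hence the two Riccati
   expressions are the same matrix. *)

Lemma mulmx1_invmx (R : comUnitRingType) n (A B : 'M[R]_n) :
  A *m B = 1%:M -> invmx A = B.
Proof.
move=> AB1; have [uA _] := mulmx1_unit AB1.
by rewrite -[invmx A]mulmx1 -AB1 mulKmx.
Qed.

Lemma invmxN (R : comUnitRingType) n (A : 'M[R]_n) :
  A \in unitmx -> invmx (- A) = - invmx A.
Proof.
move=> uA; rewrite -scaleN1r invmxZ ?unitmxZ ?unitrN1 //.
by rewrite invrN1 scaleN1r.
Qed.

Definition schur_compl (R : comUnitRingType) m n (A : 'M[R]_m) (B : 'M[R]_(m, n))
  (C : 'M[R]_(n, m)) (D : 'M[R]_n) : 'M[R]_n := D - C *m invmx A *m B.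

Section SchurComplement.
Variables (R : comUnitRingType) (m n : nat).
Variables (A : 'M[R]_m) (B : 'M[R]_(m, n)) (C : 'M[R]_(n, m)) (D : 'M[R]_n).
Hypotheses (uA : A \in unitmx) (uS : schur_compl A B C D \in unitmx).

Local Notation iA := (invmx A).
Local Notation iS := (invmx (schur_compl A B C D)).

Lemma invmx_block_schur : invmx (block_mx A B C D) =
  block_mx (iA + iA *m B *m iS *m C *m iA) (- (iA *m B *m iS))
           (- (iS *m C *m iA)) iS.
Proof.
apply: mulmx1_invmx; rewrite mulmx_block scalar_mx_block; congr block_mx.
- by rewrite mulmxDr mulmxN !mulmxA mulmxV // mul1mx addrK.
- by rewrite mulmxN !mulmxA mulmxV // mul1mx addNr.
- set S := schur_compl A B C D.
  have -> : D = S + C *m iA *m B by rewrite subrK.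
  by rewrite mulmxDr mulmxN mulmxDl !mulmxA mulmxV // mul1mx subrr.
- by rewrite mulmxN !mulmxA addrC -mulmxBl mulmxV.
Qed.

Lemma mul_row_invmx_block_col p q (X1 : 'M_(p, m)) (X2 : 'M_(p, n))
    (Y1 : 'M_(m, q)) (Y2 : 'M_(n, q)) :
  row_mx X1 X2 *m invmx (block_mx A B C D) *m col_mx Y1 Y2 =
  X1 *m iA *m Y1 + (X2 - X1 *m iA *m B) *m iS *m (Y2 - C *m iA *m Y1).
Proof.
set E := X2 - X1 *m iA *m B.
rewrite invmx_block_schur mul_row_block mul_row_col.
have -> : X1 *m (iA + iA *m B *m iS *m C *m iA) + X2 *m - (iS *m C *m iA)
          = X1 *m iA - E *m iS *m C *m iA.
  by rewrite mulmxDr !mulmxN /E !mulmxBl !mulmxA opprB addrA.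
have -> : X1 *m - (iA *m B *m iS) + X2 *m iS = E *m iS.
  by rewrite /E mulmxBl mulmxN !mulmxA addrC.
by rewrite mulmxBl addrAC mulmxBr !mulmxA addrA.
Qed.

End SchurComplement.

Lemma quadratic_critical_value (R : comUnitRingType) d l
    (S : 'M[R]_l) (Z : 'M[R]_(d, l)) (K : 'M[R]_(l, d)) :
  S^T = S -> S \in unitmx -> K = - (invmx S *m Z^T) ->
  Z *m K + (Z *m K)^T + K^T *m S *m K = - (Z *m invmx S *m Z^T).
Proof.
move=> sS uS ->; set f := Z *m invmx S *m Z^T.
have ft : f^T = f by rewrite /f !trmx_mul trmxK trmx_inv sS mulmxA.
have ZK : Z *m - (invmx S *m Z^T) = - f by rewrite mulmxN mulmxA.
rewrite ZK [(- f)^T]linearN /= ft [(- _)^T]linearN /= trmx_mul trmxK trmx_inv sS.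
by rewrite !mulNmx mulmxN opprK mulmxKV // mulmxA addrNK.
Qed.

Lemma zmod_regroup (V : zmodType) (M a b c e p1 p2 q : V) :
  M + p1 + p2 + q - (a + b + (c + e)) = M - a + ((p1 - b) + (p2 - c) + (q - e)).
Proof. by rewrite !opprD !addrA (ACl (1*5*2*6*3*7*4*8))%AC. Qed.

Section SymmetricSchurReduction.
Variables (R : comUnitRingType) (d l : nat).
Variables (N1 C N2 : 'M[R]_l) (L1 L2 : 'M[R]_(d, l)) (M : 'M[R]_d).
Hypothesis sN1 : N1^T = N1.

Local Notation iN1 := (invmx N1).
Local Notation S := (schur_compl N1 C C^T N2).
Local Notation Z := (L2 - L1 *m iN1 *m C).

Let iN1_sym : iN1^T = iN1. Proof. by rewrite trmx_inv sN1. Qed.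

Let trZ : Z^T = L2^T - C^T *m iN1 *m L1^T.
Proof. by rewrite linearB /= !trmx_mul iN1_sym mulmxA. Qed.

Lemma riccati_completed_square (K : 'M_(l, d)) :
  M + L2 *m K + (L2 *m K)^T + K^T *m N2 *m K
    - (L1 + (C *m K)^T) *m iN1 *m (L1 + (C *m K)^T)^T
  = M - L1 *m iN1 *m L1^T + (Z *m K + (Z *m K)^T + K^T *m S *m K).
Proof.
rewrite [in LHS]linearD /= !trmx_mul !trmxK !mulmxDl !mulmxDr !mulmxA.
rewrite zmod_regroup; congr (_ + (_ + _ + _)).
- by rewrite mulNmx.
- by rewrite trZ (mulmxBr K^T) !mulmxA.
- by rewrite mulmxN mulmxDl mulNmx !mulmxA.
Qed.

Hypotheses (sN2 : N2^T = N2) (uN1 : N1 \in unitmx) (uS : S \in unitmx).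

Let S_sym : S^T = S.
Proof. by rewrite linearB /= !trmx_mul trmxK iN1_sym sN2 mulmxA. Qed.

Lemma riccati_schur_reduction (K : 'M_(l, d)) :
  K = invmx (C^T *m iN1 *m C - N2) *m (L2^T - C^T *m iN1 *m L1^T) ->
  M + L2 *m K + (L2 *m K)^T + K^T *m N2 *m K
    - (L1 + (C *m K)^T) *m iN1 *m (L1 + (C *m K)^T)^T
  = M - row_mx L1 L2 *m invmx (block_mx N1 C C^T N2) *m (row_mx L1 L2)^T.
Proof.
move=> eK; have Kcrit : K = - (invmx S *m Z^T).
  by rewrite eK -[_ - N2]opprB invmxN // mulNmx trZ.
rewrite riccati_completed_square (quadratic_critical_value S_sym uS Kcrit).
by rewrite tr_row_mx mul_row_invmx_block_col // -trZ opprD addrA.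
Qed.

End SymmetricSchurReduction.

Lemma N1op_sym (R : realFieldType) d l (gamma : R) (B1 : 'M[R]_(d, l)) R1 P :
  symmx P -> symmx R1 -> symmx (N1op gamma B1 R1 P).
Proof.
by move=> sP sR1; rewrite /symmx linearD linearZ /= !trmx_mul trmxK sP sR1 mulmxA.
Qed.

Lemma N2op_sym (R : realFieldType) d l (gamma : R) (B2 : 'M[R]_(d, l)) R2 P :
  symmx P -> symmx R2 -> symmx (N2op gamma B2 R2 P).
Proof.
by move=> sP sR2; rewrite /symmx linearB linearZ /= !trmx_mul trmxK sP sR2 mulmxA.
Qed.

Theorem mainTheorem10 (R : realFieldType) (d l : nat) (gamma : R)
  (A : 'M[R]_d) (B1 B2 : 'M[R]_(d, l)) (Q : 'M[R]_d) (R1 R2 : 'M[R]_l)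
  (P : 'M[R]_d) :
  (0 < d)%N -> (0 < l)%N -> 0 <= gamma <= 1 ->
  symmx Q -> symmx R1 -> symmx R2 -> symmx P ->
  N1op gamma B1 R1 P \in unitmx ->
  S2op gamma B1 B2 R1 R2 P \in unitmx ->
  (M2star gamma A B1 B2 Q R1 R2 P
     - L1_2star gamma A B1 B2 R1 R2 P *m invmx (N1_2star gamma B1 R1 P)
         *m (L1_2star gamma A B1 B2 R1 R2 P)^T = 0
   <->
   Mop gamma A Q P
     - Lop gamma A B1 B2 P *m invmx (Nop gamma B1 B2 R1 R2 P)
         *m (Lop gamma A B1 B2 P)^T = 0).
Proof.
move=> _ _ _ _ sR1 sR2 sP uN1 uS.
have sN1 := N1op_sym gamma B1 sP sR1; have sN2 := N2op_sym gamma B2 sP sR2.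
by rewrite /M2star /L1_2star /N1_2star riccati_schur_reduction.
Qed.
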